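(* Let $\mathcal{J}=\langle U,g,f\rangle$ be an optimal control problem satisfying the standing assumptions below, and let $V:\mathbb{R}^d\to\mathbb{R}$. Then $\mathcal{J}$ admits $V$ as its general limit value if and only if there is general uniform convergence of the value functions $\{V_\theta\}$ to $V$, i.e. for every $\varepsilon>0$ there exist $S>0$ and $\eta>0$ such that every $\theta\in\Delta(\mathbb{R}_+)$ with $\overline{TV}_S(\theta)\leq\eta$ satisfies $\|V_\theta-V\|_\infty\leq\varepsilon$.
   Context: Setting: $U$ is a metric space, $g:\mathbb{R}^d\times U\to\mathbb{R}$ is Borel measurable and bounded, $f:\mathbb{R}^d\times U\to\mathbb{R}^d$ is Borel measurable with $\|f(y,u)-f(\bar y,u)\|\leq L\|y-\bar y\|$ and $\|f(y,u)\|\leq a(1+\|y\|)$ for constants $L\ge0,a>0$. $\mathcal{U}$ is the set of measurable controls $u:[0,+\infty)\to U$; $y(t,u,y_0)$ is the solution of $y'=f(y,u)$, $y(0)=y_0$. For a Borel probability measure $\theta\in\Delta(\mathbb{R}_+)$ (an evaluation), $V_\theta(y_0)=\inf_{u\in\mathcal{U}}\int_{[0,+\infty)} g(y(s,u,y_0),u(s))\,d\theta(s)$. $TV_s(\theta)=\sup_{Q\in\mathcal{B}(\mathbb{R}_+)}|\theta(Q)-\theta(Q+s)|$, $\overline{TV}_S(\theta)=\sup_{0\le s\le S}TV_s(\theta)$. A sequence $(\theta^k)$ satisfies the long-term condition (LTC) if $\overline{TV}_S(\theta^k)\to0$ for every $S>0$. $\mathcal{J}$ admits $V$ as general limit value if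 for every sequence $(\theta^k)$ satisfying the LTC, $V_{\theta^k}\to V$ uniformly on $\mathbb{R}^d$. *)

From HB Require Import structures.
From mathcomp Require Import all_boot all_order all_algebra.
From mathcomp Require Import all_classical all_reals all_analysis.
Set Implicit Arguments. Unset Strict Implicit. Unset Printing Implicit Defensive.
Import Order.TTheory GRing.Theory Num.Theory.
Import numFieldNormedType.Exports.
Local Open Scope classical_set_scope.
Local Open Scope ring_scope.

Definition borel_set (T : topologicalType) (A : set T) : Prop :=
  <<s [set B : set T | open B] >> A.

Definition borel_measurable (X Y : topologicalType) (h : X -> Y) : Prop :=
  forall B : set Y, open B -> borel_set (h @^-1` B).

Section Problem.
Variables (R : realType) (d : nat) (U : metricType R).
Notation Rd := 'rV[R]_d.

(* Measurable controls u : [0,+oo) -> U (values on (-oo,0) are irrelevant):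
   Borel measurable on [0,+oo). *)
Definition control (u : R -> U) : Prop :=
  forall B : set U, open B -> measurable (`[0, +oo[%classic `&` u @^-1` B).

(* y is a (Caratheodory) solution on [0,+oo) of y' = f(y,u), y(0) = y0:
   y t = y0 + \int_0^t f(y s, u s) ds, componentwise. *)
Definition is_solution (f : Rd -> U -> Rd) (u : R -> U) (y0 : Rd)
  (y : R -> Rd) : Prop :=
  y 0 = y0 /\
  forall t : R, 0 <= t -> forall i : 'I_d,
    lebesgue_measure.-integrable `[0, t] (fun s => (f (y s) (u s) ord0 i)%:E) /\
    y t ord0 i = y0 ord0 i +
      Rintegral lebesgue_measure `[0, t] (fun s => f (y s) (u s) ord0 i).

(* y(., u, y0): "the" solution (chosen; unique on [0,+oo) under the standing
   assumptions). *)
Definition traj (f : Rd -> U -> Rd) (u : R -> U) (y0 : Rd) : R -> Rd :=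
  match pselect (exists y, is_solution f u y0 y) with
  | left H => projT1 (cid H)
  | right _ => fun _ => y0
  end.

Definition evaluation (th : probability R R) : Prop :=
  th `[0, +oo[%classic = 1%E.

Definition Vtheta (g : Rd -> U -> R) (f : Rd -> U -> Rd)
  (th : probability R R) (y0 : Rd) : R :=
  fine (ereal_inf [set (\int[th]_(s in `[0%R, +oo[%classic) (g (traj f u y0 s) (u s))%:E)%E
                  | u in control]).

Definition TV (th : probability R R) (s : R) : \bar R :=
  ereal_sup [set `|th Q - th [set (q + s)%R | q in Q]|%E
            | Q in [set Q : set R | measurable Q /\ Q `<=` `[0, +oo[%classic]].

Definition TVbar (th : probability R R) (S : R) : \bar R :=
  ereal_sup [set TV th s | s in `[0, S]%classic].

Definition LTC (th : nat -> probability R R) : Prop :=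
  forall S : R, 0 < S -> TVbar (th k) S @[k --> \oo] --> 0%E.

Definition general_limit_value (g : Rd -> U -> R) (f : Rd -> U -> Rd)
  (V : Rd -> R) : Prop :=
  forall th : nat -> probability R R, (forall k, evaluation (th k)) -> LTC th ->
    forall eps : R, 0 < eps -> exists N : nat, forall k, (N <= k)%N ->
      forall y0 : Rd, `|Vtheta g f (th k) y0 - V y0| <= eps.

Definition general_uniform_convergence (g : Rd -> U -> R) (f : Rd -> U -> Rd)
  (V : Rd -> R) : Prop :=
  forall eps : R, 0 < eps -> exists S : R, 0 < S /\ exists eta : R, 0 < eta /\
    forall th : probability R R, evaluation th -> (TVbar th S <= eta%:E)%E ->
      forall y0 : Rd, `|Vtheta g f th y0 - V y0| <= eps.

Definition standing_assumptions (g : Rd -> U -> R) (f : Rd -> U -> Rd) : Prop :=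
  borel_measurable (fun p : Rd * U => g p.1 p.2) /\
  (exists M : R, forall y u, `|g y u| <= M) /\
  borel_measurable (fun p : Rd * U => f p.1 p.2) /\
  (exists L : R, 0 <= L /\ forall y yb u, `|f y u - f yb u| <= L * `|y - yb|) /\
  (exists a : R, 0 < a /\ forall y u, `|f y u| <= a * (1 + `|y|)).

End Problem.

(* If the value functions converge uniformly
   in the sense of [general_uniform_convergence] with parameters (S, eta), any
   sequence satisfying the long-term condition eventually has
   [TVbar th S <= eta], which gives the general limit value.  Conversely, if
   uniform convergence fails for some eps, pick for each k an evaluation th_k
   with [TVbar th_k (k+1) <= 1/(k+1)] but [|V_th_k - V| > eps] somewhere; since
   [TVbar th S] is nondecreasing in S, this sequence satisfies the long-term
   condition, contradicting the general limit value. *)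
From mathcomp Require Import all_boot all_order all_algebra.
From mathcomp Require Import all_classical all_reals all_analysis.
From mathcomp Require Import zify.
Set Implicit Arguments. Unset Strict Implicit.
Import Order.TTheory GRing.Theory Num.Theory.
Import numFieldNormedType.Exports.
Local Open Scope ring_scope.
Local Open Scope classical_set_scope.

Section TotalVariation.
Variable R : realType.
Implicit Types (th : probability R R) (s S : R).

Lemma TV_ge0 th s : (0 <= TV th s)%E.
Proof.
apply: (@le_trans _ _ `|th set0 - th [set (q + s)%R | q in set0]|%E).
  exact: abse_ge0.
by apply: ereal_sup_ubound; exists set0; split.
Qed.

Lemma TVbar_ge0 th S : 0 <= S -> (0 <= TVbar th S)%E.
Proof.
move=> S0; apply: (le_trans (TV_ge0 th 0)).
apply: ereal_sup_ubound; exists 0 => //=.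
by rewrite in_itv /= lexx.
Qed.

Lemma le_TVbar th S S' : S <= S' -> (TVbar th S <= TVbar th S')%E.
Proof.
move=> SS'; apply: ereal_sup_le => _ [s + <-] => /=.
rewrite !in_itv /= => /andP[s0 sS]; exists s => //=.
by rewrite in_itv /= s0 (le_trans sS).
Qed.

Lemma LTC_TVbar_le_harmonic (th : nat -> probability R R) :
  (forall k, (TVbar (th k) k.+1%:R <= (k.+1%:R^-1)%:E)%E) -> LTC th.
Proof.
move=> thk S S0.
apply: (@squeeze_cvge _ _ _ _ (fun=> 0%E) _ (EFin \o @harmonic R));
  [|exact: cvg_cst|exact: cvge_harmonic].
have [M SM] : exists M : nat, S <= M%:R.
  by exists (Num.truncn S).+1; apply/ltW; exact: truncnS_gt.
near=> k; rewrite TVbar_ge0 ?(ltW S0) //=.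
apply: le_trans (thk k); apply: le_TVbar; apply: (le_trans SM).
by rewrite ler_nat; near: k; exists M => // k /= Mk; lia.
Unshelve. all: end_near.
Qed.

Lemma LTC_TVbar_near_le (th : nat -> probability R R) S (eta : R) :
  LTC th -> 0 < S -> 0 < eta ->
  \forall k \near \oo, (TVbar (th k) S <= eta%:E)%E.
Proof.
move=> ltc S0 eta0; have /fine_cvgP[thS_fin thS_cvg] := ltc S S0.
near=> k; rewrite -(fineK (_ : TVbar (th k) S \is a fin_num)); last first.
  by near: k; exact: thS_fin.
by rewrite lee_fin ltW //; near: k; exact: cvgr_lt 0 thS_cvg eta eta0.
Unshelve. all: end_near.
Qed.

End TotalVariation.

Section LimitValue.
Variables (R : realType) (d : nat) (U : metricType R).
Variables (g : 'rV[R]_d -> U -> R) (f : 'rV[R]_d -> U -> 'rV[R]_d).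
Variable V : 'rV[R]_d -> R.

Lemma general_uniform_convergence_limit_value :
  general_uniform_convergence g f V -> general_limit_value g f V.
Proof.
move=> guc th ev ltc eps eps0.
have [S [S0 [eta [eta0 guc_eps]]]] := guc eps eps0.
have [N _ thN] := LTC_TVbar_near_le ltc S0 eta0.
by exists N => k Nk; exact: guc_eps (ev k) (thN k Nk).
Qed.

Lemma general_limit_value_uniform_convergence :
  general_limit_value g f V -> general_uniform_convergence g f V.
Proof.
move=> glv eps eps0; apply: contrapT => not_guc.
have bad k : exists th : probability R R,
    [/\ evaluation th, (TVbar th k.+1%:R <= (k.+1%:R^-1)%:E)%E &
        exists y0, eps < `|Vtheta g f th y0 - V y0|].
  apply: contrapT => no_bad; apply: not_guc; exists k.+1%:R; split => //.
  exists k.+1%:R^-1; split; first by rewrite invr_gt0.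
  move=> th evth thk y0; rewrite leNgt; apply/negP => eps_lt.
  by apply: no_bad; exists th; split => //; exists y0.
have [th thP] := choice bad.
have ev k : evaluation (th k) by case: (thP k).
have thk k : (TVbar (th k) k.+1%:R <= (k.+1%:R^-1)%:E)%E by case: (thP k).
have [N thN] := glv th ev (LTC_TVbar_le_harmonic thk) eps eps0.
have [_ _ [y0 eps_lt]] := thP N.
by have := thN N (leqnn N) y0; rewrite leNgt eps_lt.
Qed.

End LimitValue.

Theorem mainTheorem6 (R : realType) (d : nat) (U : metricType R)
  (g : 'rV[R]_d -> U -> R) (f : 'rV[R]_d -> U -> 'rV[R]_d)
  (V : 'rV[R]_d -> R) :
  standing_assumptions g f ->
  (general_limit_value g f V <-> general_uniform_convergence g f V).
Proof.
move=> _; split.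
- exact: general_limit_value_uniform_convergence.
- exact: general_uniform_convergence_limit_value.
Qed.
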